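(* There exist absolute constants $C, C'>0$ such that the following holds. Let $n\ge 2$, $1\le k\le n/2$ and $d\ge 0$ be integers, let $\alpha=\lceil k\log(n/k)\rceil$, and let $t$ be an integer with $t\ge C\,(dk+k^2)\log(n/k)$ (so that in particular $\alpha\le t/(2d+1)$). Then the random $t\times n$ matrix $M$ produced by $\mathsf{RandMatrix}(t,n,d,k,\alpha)$ is $d$-runlength constrained, and with probability at least $1-C'/n$ it is $k$-disjunct. (In the paper's words: with $\alpha=k\log(n/k)$ and $t=\Theta(dk\log(n/k)+k^2\log(n/k))$, the output is a $k$-disjunct, $d$-runlength constrained matrix with probability at least $1-O(1/n)$.)
   Context: $\log$ denotes the base-2 logarithm. For a vector $x$, $\mathsf{supp}(x)$ is its support. A binary $t\times n$ matrix $M$ is $d$-runlength constrained if in every column, any two $1$'s are separated by a run of at least $d$ zeros, i.e. $M_{ij}=M_{i'j}=1$ with $i<i'$ implies $i'-i\ge d+1$. A binary matrix $M$ is $k$-disjunct if for every column $j$ and every set $S$ of at most $k$ columns with $j\notin S$, $\mathsf{supp}(M_{\cdot j})\not\subseteq\bigcup_{j'\in S}\mathsf{supp}(M_{\cdot j'})$. Procedure $\mathsf{RandMatrix}(t,n,d,k,\alpha)$ (requires $\alpha\le t/(2d+1)$): each column $M_{\cdot j}$, $j\in[n]$, is generated independently and identically as follows. Initialize the list $I=(1,2,\dots,t)$, viewed in cyclic order. Repeat $\alpha$ times: pick an index $i$ uniformly at random from $I$; set $M_{ij}=1$; let $U$ consist of $i$ together with the $d$ elements of $I$ immediately preceding $i$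 and the $d$ elements of $I$ immediately succeeding $i$ in the cyclic order of $I$; remove $U$ from $I$. All entries of column $j$ not set to $1$ are $0$. *)

From mathcomp Require Import all_boot.
From Stdlib Require Import Reals.
Set Implicit Arguments. Unset Strict Implicit. Unset Printing Implicit Defensive.

Definition log2 (x : R) : R := (ln x / ln 2)%R.

Definition bmatrix (t n : nat) := 'I_t -> 'I_n -> bool.
Definition runlength_constrained (t n d : nat) (M : bmatrix t n) : Prop :=
  forall (j : 'I_n) (i i' : 'I_t),
    M i j -> M i' j -> (i < i')%nat -> (d.+1 <= i' - i)%nat.

Definition supp_col (t n : nat) (M : bmatrix t n) (j : 'I_n) : {set 'I_t} :=
  [set i | M i j].

Definition k_disjunct (t n k : nat) (M : bmatrix t n) : bool :=
  [forall j : 'I_n, forall S : {set 'I_n},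
    ((#|S| <= k)%nat && (j \notin S)) ==>
    ~~ (supp_col M j \subset \bigcup_(j' in S) supp_col M j')].

(* ---- The procedure RandMatrix, as an explicit finite probability space ----
   Rows are numbered 0..t-1.  A column is generated from a sequence of
   positional choices: at each round, the current list L (in cyclic order)
   is indexed by a position p; the chosen row is L[p], which happens with
   probability 1/|L| (uniform choice from L); positions > |L|-1 have
   probability 0.  Then the elements at cyclic distance <= d from position p
   (i.e. p itself, the d preceding and the d succeeding elements) are removed. *)

Definition cyc_near (d m p q : nat) : bool :=
  ((q + m - p) %% m <= d)%nat || ((p + m - q) %% m <= d)%nat.

Definition remove_nbhd (d : nat) (L : seq nat) (p : nat) : seq nat :=
  [seq nth 0%nat L q | q <- iota 0 (size L) & ~~ cyc_near d (size L) p q].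

(* returns (list of rows set to 1, probability weight of this choice sequence) *)
Fixpoint run_column (d : nat) (L : seq nat) (ps : seq nat) : seq nat * R :=
  match ps with
  | [::] => ([::], 1%R)
  | p :: ps' =>
      let res := run_column d (remove_nbhd d L p) ps' in
      (nth 0%nat L p :: res.1,
       ((if (p < size L)%nat then / INR (size L) else 0) * res.2)%R)
  end.

(* an outcome of all the random choices: for each column j, alpha positions *)
Definition choices (t n alpha : nat) := {ffun 'I_n -> alpha.-tuple 'I_t}.

Definition col_choices (t n alpha : nat) (f : choices t n alpha) (j : 'I_n)
  : seq nat := map val (tval (f j)).

Definition weight (t n d alpha : nat) (f : choices t n alpha) : R :=
  \big[Rmult/1%R]_(j < n) (run_column d (iota 0 t) (col_choices f j)).2.

Definition rand_matrix (t n d alpha : nat) (f : choices t n alpha) : bmatrix t n :=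
  fun (i : 'I_t) (j : 'I_n) => ((i : nat) \in (run_column d (iota 0 t) (col_choices f j)).1).

Definition prob_RandMatrix (t n d alpha : nat) (E : bmatrix t n -> bool) : R :=
  \big[Rplus/0%R]_(f : choices t n alpha)
     (if E (rand_matrix d f) then weight d f else 0%R).
Arguments prob_RandMatrix : clear implicits.

(* Each round of RandMatrix removes at most 2d+1 candidate rows, so at least
   m = t - (alpha-1)(2d+1) candidates remain before every pick, and the rows picked in one
   column are pairwise more than d apart, which is the run-length constraint.  Column j is
   covered by a set S of k other columns only if every pick of column j lands among the at
   most k*alpha rows used by S; conditioning on the other (independent) columns, each pick
   does so with probability at most k*alpha/m.  A union bound over the n * C(n,k) pairs
   (j, S) bounds the failure probability by n C(n,k) (k alpha/m)^alpha, and the choices of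
   alpha and t give m >= 128 k alpha and n^2 C(n,k) <= 128^alpha, so it is at most 1/n. *)

From HB Require Import structures.
From mathcomp Require Import all_boot zify.
From Stdlib Require Import Reals Lra.
Set Implicit Arguments. Unset Strict Implicit. Unset Printing Implicit Defensive.

Lemma count_inj_leq (g : nat -> nat) (m d : nat) :
  {in iota 0 m &, injective g} -> count (fun q => g q <= d) (iota 0 m) <= d.+1.
Proof.
move=> g_inj; rewrite -size_filter -(size_map g) -[d.+1](size_iota 0).
apply: uniq_leq_size.
  rewrite map_inj_in_uniq ?filter_uniq ?iota_uniq //.
  by move=> x y; rewrite !mem_filter => /andP[_ hx] /andP[_ hy]; apply: g_inj.
by move=> x /mapP[q]; rewrite mem_filter => /andP[hq _] ->; rewrite mem_iota.
Qed.

Lemma count_mem_uniq_leq (T : eqType) (s r : seq T) : uniq s -> count (mem r) s <= size r.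
Proof.
move=> s_uniq; rewrite -size_filter; apply: uniq_leq_size; first exact: filter_uniq.
by move=> z; rewrite mem_filter => /andP[].
Qed.

Lemma count_cyc_near d m p : p < m -> count (cyc_near d m p) (iota 0 m) <= 2 * d + 1.
Proof.
move=> lt_pm.
pose fwd q := (q + m - p) %% m; pose bwd q := (p + m - q) %% m.
have fwd_inj : {in iota 0 m &, injective fwd}.
  move=> x y; rewrite !mem_iota !add0n => hx hy /eqP.
  by rewrite /fwd -!addnBA ?(ltnW lt_pm) // eqn_modDr !modn_small // => /eqP.
have bwd_inj : {in iota 0 m &, injective bwd}.
  move=> x y; rewrite !mem_iota !add0n /bwd => hx hy e.
  have : (p + m - x) + x + y == (p + m - y) + y + x %[mod m].
    by rewrite -!addnA [y + x]addnC -modnDml e modnDml.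
  by rewrite !subnK ?eqn_modDl ?modn_small; try lia; move/eqP.
have p_both : 0 < count (predI (fun q => fwd q <= d) (fun q => bwd q <= d)) (iota 0 m).
  rewrite -has_count; apply/hasP; exists p; first by rewrite mem_iota.
  by rewrite /= /fwd /bwd addnC addnK modnn.
have := count_predUI (fun q => fwd q <= d) (fun q => bwd q <= d) (iota 0 m).
have := count_inj_leq d fwd_inj; have := count_inj_leq d bwd_inj.
rewrite [count (cyc_near _ _ _) _](_ : _ = count (predU (fun q => fwd q <= d)
  (fun q => bwd q <= d)) (iota 0 m)) //; lia.
Qed.

Lemma remove_nbhdE d L p : remove_nbhd d L p =
  map (nth 0 L) (filter (predC (cyc_near d (size L) p)) (iota 0 (size L))).
Proof. by []. Qed.

Lemma remove_nbhd_subseq d L p : subseq (remove_nbhd d L p) L.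
Proof.
rewrite remove_nbhdE; rewrite [X in subseq _ X](_ : L = map (nth 0 L) (iota 0 (size L))).
  exact/map_subseq/filter_subseq.
by rewrite -/(mkseq _ _) mkseq_nth.
Qed.

Lemma size_remove_nbhd d L p : p < size L ->
  size L <= size (remove_nbhd d L p) + (2 * d + 1).
Proof.
move=> lt_pL; rewrite remove_nbhdE size_map size_filter.
have := count_predC (cyc_near d (size L) p) (iota 0 (size L)).
have := count_cyc_near d lt_pL; rewrite size_iota; lia.
Qed.

Lemma sorted_nth_gap (L : seq nat) p q : sorted ltn L -> p <= q -> q < size L ->
  q - p <= nth 0 L q - nth 0 L p.
Proof.
move=> sL; elim: q => [|q IH] le_pq lt_qL; first by move: le_pq; rewrite leqn0 => /eqP ->.
rewrite leq_eqVlt in le_pq; case/orP: le_pq => [/eqP ->|lt_pq]; first by rewrite subnn.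
have step : nth 0 L q < nth 0 L q.+1.
  by apply: (sorted_ltn_nth ltn_trans) => //; rewrite inE ltnW.
have mono : nth 0 L p <= nth 0 L q.
  by apply: (sorted_leq_nth leq_trans leqnn 0 (sub_sorted ltnW sL)); rewrite ?inE; lia.
have := IH lt_pq (ltnW lt_qL); lia.
Qed.

Lemma mem_remove_nbhd_far d L p z : sorted ltn L -> p < size L ->
  z \in remove_nbhd d L p ->
  (nth 0 L p < z -> d < z - nth 0 L p) /\ (z < nth 0 L p -> d < nth 0 L p - z).
Proof.
move=> sL lt_pL; rewrite remove_nbhdE => /mapP[q]; rewrite mem_filter mem_iota /=.
set m := size L; rewrite /cyc_near negb_or -!ltnNge => /andP[/andP[h1 h2] lt_qm] ->.
have nth_lt i j : i < j -> j < m -> nth 0 L i < nth 0 L j.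
  by move=> *; apply: (sorted_ltn_nth ltn_trans) => //; rewrite inE; lia.
case: (ltngtP p q) => [lt_pq | lt_qp | eq_pq].
- rewrite (_ : q + m - p = q - p + m) ?modnDr ?modn_small in h1; try lia.
  have := sorted_nth_gap sL (ltnW lt_pq) lt_qm; have := nth_lt _ _ lt_pq lt_qm.
  by split; lia.
- rewrite (_ : p + m - q = p - q + m) ?modnDr ?modn_small in h2; try lia.
  have := sorted_nth_gap sL (ltnW lt_qp) lt_pL; have := nth_lt _ _ lt_qp lt_pL.
  by split; lia.
- by rewrite eq_pq addnC addnK modnn in h2.
Qed.

Definition col_rows d L ps := (run_column d L ps).1.
Definition col_weight d L ps := (run_column d L ps).2.

Lemma col_rows_cons d L p ps :
  col_rows d L (p :: ps) = nth 0 L p :: col_rows d (remove_nbhd d L p) ps.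
Proof. by []. Qed.

Lemma col_weight_cons d L p ps : col_weight d L (p :: ps) =
  ((if (p < size L)%nat then / INR (size L) else 0) * col_weight d (remove_nbhd d L p) ps)%R.
Proof. by []. Qed.

Lemma size_col_rows d L ps : size (col_rows d L ps) = size ps.
Proof. by elim: ps L => // p ps IH L; rewrite col_rows_cons /= IH. Qed.

Lemma col_rows_bounded d t L ps : 0 < t -> all (fun r => r < t) L ->
  all (fun r => r < t) (col_rows d L ps).
Proof.
move=> t_gt0; elim: ps L => [|p ps IH] L L_lt //.
rewrite col_rows_cons /= IH ?andbT.
  by case: (ltnP p (size L)) => hp; [exact: (allP L_lt _ (mem_nth 0 hp)) | rewrite nth_default].
by apply/allP => x hx; apply: (allP L_lt); exact: (mem_subseq (remove_nbhd_subseq d L p) hx).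
Qed.

Lemma col_weight_cons_neq0 d L p ps : col_weight d L (p :: ps) <> 0%R ->
  p < size L /\ col_weight d (remove_nbhd d L p) ps <> 0%R.
Proof.
rewrite col_weight_cons; case: ifP => hp w_neq0; last by rewrite Rmult_0_l in w_neq0.
by split=> // w0; apply: w_neq0; rewrite w0 Rmult_0_r.
Qed.

Lemma col_rows_sub d L ps : col_weight d L ps <> 0%R -> {subset col_rows d L ps <= L}.
Proof.
elim: ps L => [|p ps IH] L // /col_weight_cons_neq0[lt_pL w_neq0] x.
rewrite col_rows_cons inE => /orP[/eqP -> | hx]; first exact: mem_nth.
exact: (mem_subseq (remove_nbhd_subseq d L p) (IH _ w_neq0 _ hx)).
Qed.

Lemma col_rows_sep d L ps : sorted ltn L -> col_weight d L ps <> 0%R ->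
  forall x y, x \in col_rows d L ps -> y \in col_rows d L ps -> x < y -> d < y - x.
Proof.
elim: ps L => [|p ps IH] L // sL /col_weight_cons_neq0[lt_pL w_neq0].
have sL' := subseq_sorted ltn_trans (remove_nbhd_subseq d L p) sL.
have far z : z \in col_rows d (remove_nbhd d L p) ps -> _ :=
  fun hz => mem_remove_nbhd_far sL lt_pL (col_rows_sub w_neq0 hz).
move=> x y; rewrite !col_rows_cons !inE.
case/orP=> [/eqP -> | hx]; case/orP=> [/eqP -> | hy] lt_xy.
- by rewrite ltnn in lt_xy.
- by case: (far y hy) => + _; apply.
- by case: (far x hx) => _; apply.
- exact: IH sL' w_neq0 x y hx hy lt_xy.
Qed.

Local Open Scope R_scope.

HB.instance Definition _ := Monoid.isComLaw.Build R 0 Rplus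
  (fun x y z => esym (Rplus_assoc x y z)) Rplus_comm Rplus_0_l.
HB.instance Definition _ := Monoid.isComLaw.Build R 1 Rmult
  (fun x y z => esym (Rmult_assoc x y z)) Rmult_comm Rmult_1_l.
HB.instance Definition _ := Monoid.isMulLaw.Build R 0 Rmult Rmult_0_l Rmult_0_r.
HB.instance Definition _ := Monoid.isAddLaw.Build R Rmult Rplus
  Rmult_plus_distr_r Rmult_plus_distr_l.

Lemma Rsum_le (I : Type) (r : seq I) (P : pred I) (F G : I -> R) :
  (forall i, P i -> F i <= G i) ->
  \big[Rplus/0]_(i <- r | P i) F i <= \big[Rplus/0]_(i <- r | P i) G i.
Proof.
by move=> le_FG; apply: (big_ind2 Rle) => //; [lra | move=> *; apply: Rplus_le_compat].
Qed.

Lemma Rsum_ge0 (I : Type) (r : seq I) (P : pred I) (F : I -> R) :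
  (forall i, P i -> 0 <= F i) -> 0 <= \big[Rplus/0]_(i <- r | P i) F i.
Proof.
by move=> F_ge0; apply: (big_ind (Rle 0)) => //; [lra | move=> *; apply: Rplus_le_le_0_compat].
Qed.

Lemma Rprod_ge0 (I : Type) (r : seq I) (P : pred I) (F : I -> R) :
  (forall i, P i -> 0 <= F i) -> 0 <= \big[Rmult/1]_(i <- r | P i) F i.
Proof.
by move=> F_ge0; apply: (big_ind (Rle 0)) => //; [lra | move=> *; apply: Rmult_le_pos].
Qed.

Lemma iter_Rplus m c : iter m (Rplus c) 0 = INR m * c.
Proof. by elim: m => [|m IH]; rewrite ?iterS ?IH ?S_INR /=; lra. Qed.

Lemma Rsum_indicator (I : Type) (r : seq I) (P : pred I) :
  \big[Rplus/0]_(i <- r) (if P i then 1 else 0) = INR (count P r).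
Proof.
elim: r => [|x r IH]; first by rewrite big_nil.
by rewrite big_cons IH /= plus_INR; case: (P x) => /=; lra.
Qed.

Lemma sum_tuple0 (T : finType) (F : 0.-tuple T -> R) :
  \big[Rplus/0]_(x : 0.-tuple T) F x = F [tuple].
Proof. by rewrite (big_pred1 [tuple]) // => x /=; rewrite [x]tuple0; apply/esym/eqP. Qed.

Lemma sum_tuple_cons (T : finType) a (F : a.+1.-tuple T -> R) :
  \big[Rplus/0]_(x : a.+1.-tuple T) F x =
  \big[Rplus/0]_(p : T) \big[Rplus/0]_(x : a.-tuple T) F [tuple of p :: x].
Proof.
rewrite pair_big /= (reindex (fun px : T * a.-tuple T => [tuple of px.1 :: px.2])) /=.
  by apply: eq_bigr => -[p x].
exists (fun y => (thead y, [tuple of behead y])) => [[p x] _ | y _] /=.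
  by rewrite theadE; congr (_, _); apply: val_inj.
by rewrite [RHS]tuple_eta.
Qed.

Lemma col_weight_ge0 d L ps : 0 <= col_weight d L ps.
Proof.
elim: ps L => [|p ps IH] L; first by rewrite /col_weight /=; lra.
rewrite col_weight_cons; apply: Rmult_le_pos => //; case: ifP => lt_pL; last lra.
by apply/Rlt_le/Rinv_0_lt_compat/lt_0_INR/ltP; lia.
Qed.

(* The first pick is uniform on the current list [L]: positions [p >= size L] have weight 0. *)
Lemma sum_col_weight_cons d t a L (G : seq nat -> R) : (size L <= t)%nat ->
  \big[Rplus/0]_(x : a.+1.-tuple 'I_t)
     (col_weight d L (map val x) * G (col_rows d L (map val x))) =
  \big[Rplus/0]_(p < size L) (/ INR (size L) *
     \big[Rplus/0]_(x : a.-tuple 'I_t)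
       (col_weight d (remove_nbhd d L p) (map val x) *
        G (nth 0%nat L p :: col_rows d (remove_nbhd d L p) (map val x)))).
Proof.
move=> L_le_t.
pose F p := / INR (size L) * \big[Rplus/0]_(x : a.-tuple 'I_t)
  (col_weight d (remove_nbhd d L p) (map val x) *
   G (nth 0%nat L p :: col_rows d (remove_nbhd d L p) (map val x))).
rewrite sum_tuple_cons (big_ord_widen t F L_le_t) [RHS]big_mkcond.
apply: eq_bigr => p _; rewrite /F.
under eq_bigr => x _ do rewrite /= col_weight_cons col_rows_cons Rmult_assoc.
case: ifP => lt_pL; first by rewrite -big_distrr.
by rewrite big1 // => x _; rewrite Rmult_0_l.
Qed.

Lemma sum_col_weight d t a L : (size L <= t)%nat ->
  (1 + a * (2 * d + 1) <= size L + (2 * d + 1))%nat ->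
  \big[Rplus/0]_(x : a.-tuple 'I_t) col_weight d L (map val x) = 1.
Proof.
elim: a L => [|a IH] L L_le_t room; first by rewrite sum_tuple0.
under eq_bigr do rewrite -[col_weight _ _ _]Rmult_1_r.
rewrite (sum_col_weight_cons _ _ (fun _ => 1)) //.
rewrite (eq_bigr (fun _ => / INR (size L))) => [|p _].
  by rewrite big_const_ord iter_Rplus Rinv_r //; apply: not_0_INR; lia.
under eq_bigr do rewrite Rmult_1_r.
rewrite IH ?Rmult_1_r //.
  exact: leq_trans (size_subseq (remove_nbhd_subseq d L p)) L_le_t.
by have := size_remove_nbhd d (ltn_ord p); lia.
Qed.

(* The last hypothesis says that at least [m] candidates remain before each of the [a] picks. *)
Lemma col_rows_in_prob_le d t a (L : seq nat) m (Us : seq nat) : uniq L -> (size L <= t)%nat ->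
  (0 < m)%nat -> (m + a * (2 * d + 1) <= size L + (2 * d + 1))%nat ->
  \big[Rplus/0]_(x : a.-tuple 'I_t)
     (col_weight d L (map val x) *
      (if all (fun r => r \in Us) (col_rows d L (map val x)) then 1 else 0))
  <= (INR (size Us) / INR m) ^ a.
Proof.
move=> + + m_gt0; elim: a L => [|a IH] L uL L_le_t room.
  by rewrite sum_tuple0 /col_weight /col_rows /=; lra.
have m_pos : 0 < INR m by apply/lt_0_INR/ltP.
have L_pos : 0 < INR (size L) by apply/lt_0_INR/ltP; lia.
set q := INR (size Us) / INR m.
have q_ge0 : 0 <= q by apply: Rmult_le_pos; [apply: pos_INR | apply/Rlt_le/Rinv_0_lt_compat].
rewrite (sum_col_weight_cons _ _ (fun rs => if all (fun r => r \in Us) rs then 1 else 0)) //.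
have inner (p : 'I_(size L)) :
  \big[Rplus/0]_(x : a.-tuple 'I_t)
    (col_weight d (remove_nbhd d L p) (map val x) *
     (if all (fun r => r \in Us) (nth 0%nat L p :: col_rows d (remove_nbhd d L p) (map val x))
      then 1 else 0)) <= (if nth 0%nat L p \in Us then 1 else 0) * q ^ a.
  rewrite /=; case: (nth 0%nat L p \in Us) => /=; last first.
    by rewrite big1 ?Rmult_0_l; [lra | move=> x _; rewrite Rmult_0_r].
  rewrite Rmult_1_l; apply: IH; first exact: subseq_uniq (remove_nbhd_subseq d L p) uL.
    exact: leq_trans (size_subseq (remove_nbhd_subseq d L p)) L_le_t.
  by have := size_remove_nbhd d (ltn_ord p); rewrite mulSn in room; lia.
apply: Rle_trans (Rsum_le _ (fun p _ => Rmult_le_compat_l _ _ _ _ (inner p))) _.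
  by move=> _ _; apply/Rlt_le/Rinv_0_lt_compat.
rewrite -big_distrr -big_distrl.
rewrite -(big_mkord xpredT (fun p => if nth 0%nat L p \in Us then 1 else 0)) Rsum_indicator.
rewrite /index_iota subn0 -(count_map (nth 0%nat L)) -/(mkseq _ _) mkseq_nth.
have frac : / INR (size L) * INR (count (fun r => r \in Us) L) <= q.
  apply: Rle_trans (_ : / INR (size L) * INR (size Us) <= _).
    apply: Rmult_le_compat_l; first exact/Rlt_le/Rinv_0_lt_compat.
    exact/le_INR/leP/count_mem_uniq_leq.
  rewrite /q /Rdiv Rmult_comm; apply: Rmult_le_compat_l; first exact: pos_INR.
  by apply: Rinv_le_contravar => //; apply/le_INR/leP; lia.
rewrite /= -Rmult_assoc; apply: Rmult_le_compat_r => //; exact: pow_le.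
Qed.

Lemma rand_matrix_runlength t n d alpha (f : choices t n alpha) :
  weight d f <> 0 -> runlength_constrained d (rand_matrix d f).
Proof.
move=> w_neq0 j i i' hi hi' lt_ii'.
have col_neq0 : col_weight d (iota 0 t) (col_choices f j) <> 0.
  by move=> w0; apply: w_neq0; rewrite /weight (bigD1 j) //= -/(col_weight _ _ _) w0 Rmult_0_l.
exact: col_rows_sep (iota_ltn_sorted 0 t) col_neq0 _ _ hi hi' lt_ii'.
Qed.

Section ProductWeight.
Variables (I J : finType) (w : I -> J -> R) (i0 : I) (y0 : J).
Hypothesis w_ge0 : forall i y, 0 <= w i y.
Hypothesis w_sum1 : forall i, i != i0 -> \big[Rplus/0]_(y : J) w i y = 1.

Definition ffun_set (f : {ffun I -> J}) (y : J) : {ffun I -> J} :=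
  [ffun i => if i == i0 then y else f i].

Lemma sum_prod_weight_fixed :
  \big[Rplus/0]_(g : {ffun I -> J} | g i0 == y0) \big[Rmult/1]_(i | i != i0) w i (g i) = 1.
Proof.
pose F i y := if i == i0 then (if y == y0 then 1 else 0) else w i y.
have F_sum1 : \big[Rmult/1]_(i : I) \big[Rplus/0]_(y : J) F i y = 1.
  rewrite big1 // => i _; rewrite /F; case: eqP => [_|/eqP ne_i]; last exact: w_sum1.
  by rewrite -big_mkcond /= big_pred1_eq.
rewrite bigA_distr_bigA in F_sum1; rewrite -[RHS]F_sum1 [LHS]big_mkcond /=.
apply: eq_bigr => g _; rewrite [RHS](bigD1 i0) //= /F eqxx.
case: eqP => _; last by rewrite Rmult_0_l.
by rewrite Rmult_1_l; apply: eq_bigr => i /negPf ->.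
Qed.

Lemma sum_prod_weight_cond_le (P : pred {ffun I -> J}) (beta : R) :
  (forall f : {ffun I -> J},
     \big[Rplus/0]_(y : J) (w i0 y * (if P (ffun_set f y) then 1 else 0)) <= beta) ->
  \big[Rplus/0]_(f : {ffun I -> J})
     ((\big[Rmult/1]_(i : I) w i (f i)) * (if P f then 1 else 0)) <= beta.
Proof.
move=> cond_le.
have split_i0 y : \big[Rplus/0]_(f : {ffun I -> J} | true && (f i0 == y))
     ((\big[Rmult/1]_i w i (f i)) * (if P f then 1 else 0)) =
   \big[Rplus/0]_(g : {ffun I -> J} | g i0 == y0)
     ((\big[Rmult/1]_(i | i != i0) w i (g i)) * (w i0 y * (if P (ffun_set g y) then 1 else 0))).
  rewrite (reindex_onto (ffun_set ^~ y) (ffun_set ^~ y0)) /=; last first.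
    by move=> f /eqP f_i0; apply/ffunP => i; rewrite !ffunE; case: eqP => // ->.
  apply: eq_big => [g|g /andP[_ g_i0]].
    rewrite ffunE !eqxx /=; apply/eqP/eqP => [<- | g_i0]; first by rewrite ffunE eqxx.
    by apply/ffunP => i; rewrite !ffunE; case: eqP => // ->.
  rewrite (bigD1 i0) //= ffunE eqxx (eq_bigr (fun i => w i (g i))); first lra.
  by move=> i /negPf ne_i; rewrite ffunE ne_i.
rewrite (partition_big (fun f : {ffun I -> J} => f i0) xpredT) //=.
rewrite (eq_bigr _ (fun y _ => split_i0 y)) exchange_big /=.
apply: Rle_trans (_ : \big[Rplus/0]_(g : {ffun I -> J} | g i0 == y0)
     ((\big[Rmult/1]_(i | i != i0) w i (g i)) * beta) <= _).
  apply: Rsum_le => g _; rewrite -big_distrr /=.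
  by apply: Rmult_le_compat_l; [apply: Rprod_ge0 | apply: cond_le].
by rewrite -big_distrl /= sum_prod_weight_fixed Rmult_1_l; apply: Rle_refl.
Qed.

End ProductWeight.

Lemma subset_extend_card (T : finType) (S A : {set T}) k :
  S \subset A -> (#|S| <= k <= #|A|)%nat ->
  exists2 S' : {set T}, S \subset S' & (S' \subset A) && (#|S'| == k).
Proof.
move: {2}(k - #|S|)%nat (erefl (k - #|S|)%nat) => e.
elim: e S => [|e IH] S gap sub_SA /andP[le_Sk le_kA].
  by exists S => //; rewrite sub_SA eqn_leq le_Sk; lia.
have /properP[_ [x xA xS]] : S \proper A by rewrite properEcard sub_SA; lia.
have card_xS : #|x |: S| = #|S|.+1 by rewrite cardsU1 xS.
have [|||S' sub_xS' S'_ok] := IH (x |: S); rewrite ?card_xS ?subUset ?sub1set ?xA //.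
- by lia.
- by apply/andP; split; lia.
by exists S' => //; apply: subset_trans sub_xS'; apply: subsetUr.
Qed.

Section RandMatrix.
Variables (t n d alpha : nat).
Hypotheses (alpha_gt0 : (0 < alpha)%nat) (rows_enough : (alpha * (2 * d + 1) <= t)%nat).

(* A lower bound on the number of candidate rows left at every round. *)
Definition avail_rows := (t - alpha.-1 * (2 * d + 1))%nat.

Lemma t_gt0 : (0 < t)%nat.
Proof. by move: rows_enough; case: alpha alpha_gt0 => // a _; lia. Qed.

Lemma avail_rows_gt0 : (0 < avail_rows)%nat.
Proof. by rewrite /avail_rows; move: rows_enough; case: alpha alpha_gt0 => // a _; lia. Qed.

Lemma avail_rows_room :
  (avail_rows + alpha * (2 * d + 1) <= size (iota 0 t) + (2 * d + 1))%nat.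
Proof.
by rewrite size_iota /avail_rows; move: rows_enough; case: alpha alpha_gt0 => // a _; lia.
Qed.

Lemma sum_col_weight_iota :
  \big[Rplus/0]_(x : alpha.-tuple 'I_t) col_weight d (iota 0 t) (map val x) = 1.
Proof.
apply: sum_col_weight; rewrite size_iota //.
by have := avail_rows_room; have := avail_rows_gt0; rewrite size_iota; lia.
Qed.

Lemma sum_weight : \big[Rplus/0]_(f : choices t n alpha) weight d f = 1.
Proof.
rewrite /weight -(bigA_distr_bigA (fun (_ : 'I_n) (x : alpha.-tuple 'I_t) =>
  col_weight d (iota 0 t) (map val x))) /=.
by rewrite big1 // => j _; apply: sum_col_weight_iota.
Qed.

Lemma weight_ge0 (f : choices t n alpha) : 0 <= weight d f.
Proof. by apply: Rprod_ge0 => j _; apply: col_weight_ge0. Qed.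

Definition covered (f : choices t n alpha) (j : 'I_n) (S : {set 'I_n}) : bool :=
  supp_col (rand_matrix d f) j \subset \bigcup_(j' in S) supp_col (rand_matrix d f) j'.

Definition cover_rows (f : choices t n alpha) (S : {set 'I_n}) : seq nat :=
  flatten [seq col_rows d (iota 0 t) (col_choices f j') | j' <- enum S].

Lemma size_cover_rows (f : choices t n alpha) (S : {set 'I_n}) :
  size (cover_rows f S) = (#|S| * alpha)%nat.
Proof.
rewrite size_flatten /shape -map_comp (eq_map (g := fun _ => alpha)); last first.
  by move=> j' /=; rewrite size_col_rows size_map size_tuple.
by rewrite cardE; elim: (enum S) => //= x s ->; rewrite mulSn.
Qed.

Lemma covered_rows_in (f : choices t n alpha) j (S : {set 'I_n}) (y : alpha.-tuple 'I_t) :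
  j \notin S ->
  covered (ffun_set j f y) j S ->
  all (fun r => r \in cover_rows f S) (col_rows d (iota 0 t) (map val y)).
Proof.
move=> jS cov; apply/allP => r r_y.
have r_lt_t : (r < t)%nat.
  have iota_lt : all (fun r => r < t)%nat (iota 0 t) by apply/allP => z; rewrite mem_iota.
  exact: (allP (col_rows_bounded d (map val y) t_gt0 iota_lt)).
have := subsetP cov (Ordinal r_lt_t).
rewrite inE /rand_matrix /col_choices ffunE eqxx => /(_ r_y) /bigcupP[j' j'S].
have ne_j'j : (j' == j) = false by apply/negbTE; apply: contraNneq jS => <-.
rewrite inE /rand_matrix /col_choices ffunE ne_j'j => r_j'.
by apply/flatten_mapP; exists j'; rewrite ?mem_enum.
Qed.

Lemma covered_prob_le j (S : {set 'I_n}) : j \notin S ->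
  \big[Rplus/0]_(f : choices t n alpha) (weight d f * (if covered f j S then 1 else 0))
  <= (INR (#|S| * alpha) / INR avail_rows) ^ alpha.
Proof.
(* Conditioned on the other columns, column [j] is covered only if all its rows are in
   [cover_rows f S]. *)
move=> jS.
pose y0 : alpha.-tuple 'I_t := [tuple of nseq alpha (Ordinal t_gt0)].
apply: (Rle_trans _ (\big[Rplus/0]_(f : {ffun 'I_n -> alpha.-tuple 'I_t})
  ((\big[Rmult/1]_(i : 'I_n) col_weight d (iota 0 t) (map val (f i))) *
   (if covered f j S then 1 else 0)))); first exact: Rle_refl.
apply: (@sum_prod_weight_cond_le _ _
  (fun (_ : 'I_n) (x : alpha.-tuple 'I_t) => col_weight d (iota 0 t) (map val x))
  j y0 _ _ (fun f => covered f j S)).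
- by move=> *; apply: col_weight_ge0.
- by move=> *; apply: sum_col_weight_iota.
move=> f.
apply: Rle_trans (_ : \big[Rplus/0]_(y : alpha.-tuple 'I_t) (col_weight d (iota 0 t) (map val y) *
  (if all (fun r => r \in cover_rows f S) (col_rows d (iota 0 t) (map val y)) then 1 else 0))
  <= _).
  apply: Rsum_le => y _; case: ifP => [/(covered_rows_in jS) -> | _]; first exact: Rle_refl.
  by rewrite Rmult_0_r; apply: Rmult_le_pos; [apply: col_weight_ge0 | case: ifP; lra].
rewrite -(size_cover_rows f S).
apply: col_rows_in_prob_le; rewrite ?size_iota //; first exact: iota_uniq.
- exact: avail_rows_gt0.
- by have := avail_rows_room; rewrite size_iota.
Qed.

Section Disjunct.
Variables (k : nat).
Hypothesis k_lt_n : (k < n)%nat.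

Lemma not_k_disjunct_covered (f : choices t n alpha) : ~~ k_disjunct k (rand_matrix d f) ->
  exists (j : 'I_n) (S : {set 'I_n}), [/\ #|S| = k, j \notin S & covered f j S].
Proof.
rewrite negb_forall => /existsP[j]; rewrite negb_forall => /existsP[S].
rewrite negb_imply negbK => /andP[/andP[le_Sk jS] cov].
have [||S' sub_SS' /andP[sub_S'A /eqP card_S']] :=
  subset_extend_card (A := [set~ j]) (k := k) (S := S).
- by apply/subsetP => x xS; rewrite !inE; apply: contraNneq jS => <-.
- by rewrite le_Sk cardsC1 card_ord; lia.
exists j, S'; split => //; first by apply/negP => /(subsetP sub_S'A); rewrite !inE eqxx.
apply: subset_trans cov _; apply/subsetP => i /bigcupP[j' j'S ij'].
by apply/bigcupP; exists j' => //; apply: (subsetP sub_SS').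
Qed.

Lemma not_k_disjunct_le (f : choices t n alpha) :
  (if k_disjunct k (rand_matrix d f) then 0 else 1) <=
  \big[Rplus/0]_(j : 'I_n) \big[Rplus/0]_(S : {set 'I_n} | (#|S| == k) && (j \notin S))
     (if covered f j S then 1 else 0).
Proof.
have indicator_ge0 j' S' : 0 <= if covered f j' S' then 1 else 0 by case: ifP; lra.
case: ifP => [_ | /negbT /not_k_disjunct_covered[j [S [card_S jS cov]]]].
  by apply: Rsum_ge0 => j _; apply: Rsum_ge0.
rewrite (bigD1 j) // (bigD1 S) /=; last by rewrite card_S eqxx jS.
rewrite cov; apply: (Rle_trans _ (1 + 0 + 0)); first lra.
apply: Rplus_le_compat; first apply: Rplus_le_compat_l.
  by apply: Rsum_ge0 => S' _; apply: indicator_ge0.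
by apply: Rsum_ge0 => i _; apply: Rsum_ge0 => S' _; apply: indicator_ge0.
Qed.

Lemma sum_weight_not_k_disjunct_le :
  \big[Rplus/0]_(f : choices t n alpha)
    (weight d f * (if k_disjunct k (rand_matrix d f) then 0 else 1))
  <= INR n * (INR 'C(n, k) * (INR (k * alpha) / INR avail_rows) ^ alpha).
Proof.
set beta := (INR (k * alpha) / INR avail_rows) ^ alpha.
have beta_ge0 : 0 <= beta.
  apply/pow_le/Rmult_le_pos; first exact: pos_INR.
  by apply/Rlt_le/Rinv_0_lt_compat/lt_0_INR/ltP; apply: avail_rows_gt0.
apply: Rle_trans
  (Rsum_le _ (fun f _ => Rmult_le_compat_l _ _ _ (weight_ge0 f) (not_k_disjunct_le f))) _.
under eq_bigr => f _ do rewrite big_distrr /=.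
rewrite exchange_big /=.
apply: (Rle_trans _ (\big[Rplus/0]_(j < n) (INR 'C(n, k) * beta))); last first.
  by rewrite big_const_ord iter_Rplus; apply: Rle_refl.
apply: Rsum_le => j _.
under eq_bigr => f _ do rewrite big_distrr /=.
rewrite exchange_big /=.
apply: (Rle_trans _ (\big[Rplus/0]_(S : {set 'I_n} | (#|S| == k) && (j \notin S)) beta)).
  by apply: Rsum_le => S /andP[/eqP card_S jS]; rewrite /beta -card_S; apply: covered_prob_le.
apply: (Rle_trans _ (\big[Rplus/0]_(S : {set 'I_n} | #|S| == k) beta)).
  rewrite big_mkcond [X in _ <= X]big_mkcond /=; apply: Rsum_le => S _.
  by case: (#|S| == k); case: (j \notin S) => /=; lra.
by rewrite big_const iter_Rplus -cardsE card_draws card_ord; apply: Rle_refl.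
Qed.

Lemma prob_k_disjunct_ge : prob_RandMatrix t n d alpha (k_disjunct k) >=
  1 - INR n * (INR 'C(n, k) * (INR (k * alpha) / INR avail_rows) ^ alpha).
Proof.
have := sum_weight_not_k_disjunct_le.
have : prob_RandMatrix t n d alpha (k_disjunct k) +
    \big[Rplus/0]_(f : choices t n alpha)
      (weight d f * (if k_disjunct k (rand_matrix d f) then 0 else 1)) = 1.
  rewrite -big_split -[RHS]sum_weight; apply: eq_bigr => f _ /=; case: ifP => _; lra.
lra.
Qed.
End Disjunct.
End RandMatrix.

Lemma INR_expn m e : INR (expn m e) = INR m ^ e.
Proof. by elim: e => // e IH; rewrite expnS mult_INR IH. Qed.

(* (1 + 1/k)^k <= e <= 3 *)
Lemma succ_pow_le (k : nat) : (0 < k)%nat -> INR k.+1 ^ k <= 3 * INR k ^ k.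
Proof.
move=> k_gt0; have k_pos : 0 < INR k by apply/lt_0_INR/ltP.
have inv_pos := Rinv_0_lt_compat _ k_pos.
rewrite (_ : INR k.+1 = INR k * (1 + / INR k)) ?Rpow_mult_distr; last first.
  by rewrite S_INR; field; lra.
suff : (1 + / INR k) ^ k <= 3 by have := pow_lt _ k k_pos; nra.
have : (1 + / INR k) ^ k <= exp (/ INR k) ^ k.
  by apply: pow_incr; split; [lra | apply: exp_ineq1_le].
have := exp_le_3; rewrite -[exp _ ^ k]exp_ln ?ln_pow ?ln_exp ?Rinv_r; try lra.
  exact: exp_pos.
exact/pow_lt/exp_pos.
Qed.

Lemma leq_exp2rW m n e : (m <= n)%nat -> (expn m e <= expn n e)%nat.
Proof. by case: e => // e; rewrite leq_exp2r. Qed.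

Lemma expn_le_fact k : (expn k k <= expn 3 k * k`!)%nat.
Proof.
elim: k => // k IH; case: k IH => // k IH.
have step : (expn k.+2 k.+1 <= 3 * expn k.+1 k.+1)%nat.
  by apply/leP/INR_le; rewrite mult_INR !INR_expn [INR 3]INR_IZR_INZ; apply: succ_pow_le.
rewrite expnS (expnS 3) factS.
have := leq_mul (leqnn k.+2) step; have := leq_mul (leqnn (3 * k.+2)) IH; nia.
Qed.

Lemma ffact_leq_expn n k : (n ^_ k <= expn n k)%nat.
Proof. by elim: k => // k IH; rewrite ffactnSr expnSr leq_mul // leq_subr. Qed.

Lemma bin_mul_expn_leq n k : ('C(n, k) * expn k k <= expn 3 k * expn n k)%nat.
Proof.
apply: leq_trans (leq_mul (leqnn _) (expn_le_fact k)) _.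
by rewrite mulnCA leq_mul2l bin_ffact ffact_leq_expn orbT.
Qed.

Lemma leq_mul_exp2_of_expn n k a : (0 < k)%nat ->
  (expn n k <= expn k k * expn 2 a)%nat -> (n <= k * expn 2 a)%nat.
Proof.
case: k => // k _ le_nk; rewrite leqNgt; apply/negP => lt_n.
have le_kn : (k.+1 <= n)%nat by apply: leq_trans (ltnW lt_n); rewrite leq_pmulr // expn_gt0.
have := leq_exp2rW k le_kn; have : (0 < expn k.+1 k)%nat by rewrite expn_gt0.
move: le_nk; rewrite !expnS; nia.
Qed.

Lemma sqr_mul_bin_leq n k a : (0 < k <= a)%nat -> (expn n k <= expn k k * expn 2 a)%nat ->
  (n * n * 'C(n, k) <= expn 128 a)%nat.
Proof.
move=> /andP[k_gt0 le_ka] le_nk.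
have le_n : (n <= expn 4 a)%nat.
  apply: leq_trans (leq_mul_exp2_of_expn k_gt0 le_nk) _.
  rewrite (_ : 4 = 2 * 2)%nat // expnMn leq_mul2r; apply/orP; right.
  exact: leq_trans (ltnW (ltn_expl k (isT : (1 < 2)%nat))) (leq_pexp2l (isT : (0 < 2)%nat) le_ka).
have le_bin : ('C(n, k) <= expn 8 a)%nat.
  have : ('C(n, k) * expn k k <= expn 3 k * expn 2 a * expn k k)%nat.
    apply: leq_trans (bin_mul_expn_leq n k) _.
    by rewrite -mulnA [(expn 2 a * _)%nat]mulnC leq_mul2l le_nk orbT.
  rewrite leq_pmul2r ?expn_gt0 ?k_gt0 // => /leq_trans; apply.
  rewrite (_ : 8 = 4 * 2)%nat // expnMn leq_mul2r; apply/orP; right.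
  exact: leq_trans (leq_exp2rW k (isT : (3 <= 4)%nat)) (leq_pexp2l (isT : (0 < 4)%nat) le_ka).
rewrite (_ : 128 = 4 * 4 * 8)%nat // !expnMn.
by apply: leq_mul; first apply: leq_mul.
Qed.

Lemma union_bound_le_inv x c y m a : (0 < x)%nat -> (0 < m)%nat ->
  (x * x * c * expn y a <= expn m a)%nat -> INR x * (INR c * (INR y / INR m) ^ a) <= 1 / INR x.
Proof.
move=> x_gt0 m_gt0 le_xm.
have X_pos : 0 < INR x by apply/lt_0_INR/ltP.
have M_pos : 0 < INR (expn m a) by apply/lt_0_INR/ltP; rewrite expn_gt0 m_gt0.
have : INR x * INR x * INR c * INR (expn y a) <= INR (expn m a).
  by rewrite -!mult_INR; apply/le_INR/leP.
rewrite /Rdiv Rpow_mult_distr pow_inv -!INR_expn => le_XM.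
apply: (Rmult_le_reg_l (INR x * INR (expn m a))); first exact: Rmult_lt_0_compat.
by rewrite (_ : _ * (1 * _) = INR (expn m a)); [field_simplify; lra | field; lra].
Qed.

Lemma ln_le_ln x y : 0 < x -> 0 < y -> (ln x <= ln y <-> x <= y).
Proof.
move=> x_pos y_pos; split=> le_xy.
  by case: (Rle_lt_dec x y) => // lt_yx; have := ln_increasing _ _ y_pos lt_yx; lra.
by case: (Req_dec x y) => [-> | ne]; [lra | apply/Rlt_le/ln_increasing; lra].
Qed.

Lemma log2_ge1 n k : (1 <= k)%nat -> (2 * k <= n)%nat -> 1 <= log2 (INR n / INR k).
Proof.
move=> k_ge1 le_2k_n.
have K_pos : 0 < INR k by apply/lt_0_INR/ltP.
have two_le : 2 <= INR n / INR k.
  rewrite -[2](Rmult_div_l _ (INR k)); last lra.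
  apply: Rmult_le_compat_r; first exact/Rlt_le/Rinv_0_lt_compat.
  by rewrite -(mult_INR 2); apply/le_INR/leP.
have ln2_pos : 0 < ln 2 by have := ln_lt_2; lra.
rewrite /log2 -(Rinv_r (ln 2)); last lra.
apply: Rmult_le_compat_r; first exact/Rlt_le/Rinv_0_lt_compat.
by apply/ln_le_ln => //; lra.
Qed.

Lemma expn_le_of_log2 n k a : (1 <= k)%nat -> (2 * k <= n)%nat ->
  INR k * log2 (INR n / INR k) <= INR a -> (expn n k <= expn k k * expn 2 a)%nat.
Proof.
move=> k_ge1 le_2k_n le_a.
have K_pos : 0 < INR k by apply/lt_0_INR/ltP.
have Q_pos : 0 < INR n / INR k by apply: Rdiv_lt_0_compat => //; apply/lt_0_INR/ltP; lia.
have ln2_pos : 0 < ln 2 by have := ln_lt_2; lra.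
have le_pow : (INR n / INR k) ^ k <= 2 ^ a.
  apply/ln_le_ln; [exact: pow_lt | apply: pow_lt; lra |].
  rewrite !ln_pow //; last lra.
  have := Rmult_le_compat_r _ _ _ (Rlt_le _ _ ln2_pos) le_a.
  by rewrite /log2 /Rdiv !Rmult_assoc Rinv_l ?Rmult_1_r; lra.
have KK_pos : 0 < INR k ^ k by exact: pow_lt.
apply/leP/INR_le; rewrite mult_INR !INR_expn (_ : INR 2 = 2) //.
have := Rmult_le_compat_l _ _ _ (Rlt_le _ _ KK_pos) le_pow.
rewrite /Rdiv Rpow_mult_distr pow_inv Rmult_comm Rmult_assoc Rinv_l; lra.
Qed.

Lemma alpha_budget n k d alpha t : (1 <= k)%nat -> (2 * k <= n)%nat ->
  INR alpha - 1 < INR k * log2 (INR n / INR k) <= INR alpha ->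
  INR t >= 512 * (INR d * INR k + INR k ^ 2) * log2 (INR n / INR k) ->
  (k <= alpha)%nat /\ (128 * (k * alpha) + alpha * (2 * d + 1) <= t)%nat.
Proof.
move=> k_ge1 le_2k_n [lt_alpha le_alpha] le_t.
have L_ge1 := log2_ge1 k_ge1 le_2k_n.
set L := log2 _ in lt_alpha le_alpha le_t L_ge1.
have K_ge1 : 1 <= INR k by apply/(le_INR 1)/leP.
have D_ge0 := pos_INR d.
have L_ge0 : 0 <= L by lra.
have KL_ge_K : INR k * 1 <= INR k * L by apply: Rmult_le_compat_l; lra.
split; first by apply/leP/INR_le; lra.
have A_le : INR alpha <= 2 * (INR k * L) by lra.
have f1 := Rmult_le_compat_l (INR k) _ _ (pos_INR k) A_le.
have f2 := Rmult_le_compat_r (2 * INR d + 1) _ _ ltac:(lra) A_le.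
have f3 : INR k * L <= INR k * INR k * L.
  by apply: Rmult_le_compat_r => //; rewrite -{1}[INR k]Rmult_1_r; apply: Rmult_le_compat_l; lra.
have f4 : 0 <= INR d * INR k * L by apply: Rmult_le_pos => //; apply: Rmult_le_pos; lra.
apply/leP/INR_le; rewrite plus_INR !mult_INR plus_INR mult_INR.
have -> : INR 128 = 128 by rewrite INR_IZR_INZ.
have -> : INR 2 = 2 by [].
have -> : INR 1 = 1 by [].
lra.
Qed.

Theorem theorem1 :
  exists C C' : R, (0 < C)%R /\ (0 < C')%R /\
  forall (n k d alpha t : nat),
    (2 <= n)%nat -> (1 <= k)%nat -> (2 * k <= n)%nat ->
    (INR alpha - 1 < INR k * log2 (INR n / INR k) <= INR alpha)%R ->
    (INR t >= C * (INR d * INR k + INR k ^ 2) * log2 (INR n / INR k))%R ->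
    (alpha * (2 * d + 1) <= t)%nat /\
    (forall f : choices t n alpha, weight d f <> 0%R ->
        runlength_constrained d (rand_matrix d f)) /\
    (prob_RandMatrix t n d alpha
        (k_disjunct k) >= 1 - C' / INR n)%R.
Proof.
exists 512, 1; split; first lra; split; first lra.
move=> n k d alpha t n_ge2 k_ge1 le_2k_n alpha_ceil le_t.
have [le_k_alpha budget] := alpha_budget k_ge1 le_2k_n alpha_ceil le_t.
have alpha_gt0 : (0 < alpha)%nat by lia.
have rows_enough : (alpha * (2 * d + 1) <= t)%nat by lia.
have k_lt_n : (k < n)%nat by lia.
split => //; split; first exact: rand_matrix_runlength.
have room : (128 * (k * alpha) <= avail_rows t d alpha)%nat.
  by rewrite /avail_rows; move: budget; case: (alpha) alpha_gt0 => // a _; rewrite mulSn; lia.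
have le_count :
    (n * n * 'C(n, k) * expn (k * alpha) alpha <= expn (avail_rows t d alpha) alpha)%nat.
  have le_nk := expn_le_of_log2 k_ge1 le_2k_n (proj2 alpha_ceil).
  apply: leq_trans (leq_mul (sqr_mul_bin_leq _ le_nk) (leqnn _)) _; first by rewrite k_ge1.
  by rewrite -expnMn; apply: leq_exp2rW.
have := prob_k_disjunct_ge alpha_gt0 rows_enough k_lt_n.
have := union_bound_le_inv (ltnW n_ge2) (avail_rows_gt0 alpha_gt0 rows_enough) le_count.
lra.
Qed.
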